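(* Let $k\ge1$. The square Hermitian orthogonal design $\mathcal{H}_{2k-1}$ induces an irreducible representation of dimension $2^{k-1}$ of the group $\mathcal{G}_{2k-2}$.
   Context: Let $x_1,x_2,\ldots$ be formal real indeterminates. Define $\mathcal{H}_2=(x_1+x_2\sqrt{-1})$ and for $k>1$ the $2^{k-1}\times2^{k-1}$ matrix $\mathcal{H}_{2k}=\begin{pmatrix}\mathcal{H}_{2k-2} & (x_{2k-1}+x_{2k}\sqrt{-1})I_{2^{k-2}}\\ -(x_{2k-1}-x_{2k}\sqrt{-1})I_{2^{k-2}} & \mathcal{H}_{2k-2}^H\end{pmatrix}$ (conjugate transpose with $x_i$ real); $\mathcal{H}_{2k-1}$ is obtained from $\mathcal{H}_{2k}$ by setting $x_{2k}=0$. It satisfies $\mathcal{H}_{2k-1}^H\mathcal{H}_{2k-1}=(x_1^2+\cdots+x_{2k-1}^2)I$. For $m\ge0$, $\mathcal{G}_m$ is the group of order $2^{m+1}$ generated by $g_1,\ldots,g_m$ and a central element $-1$ of order $2$ subject to $g_i^2=-1$ and $g_ig_j=-g_jg_i$ for $i\ne j$. Induced representation: write $\mathcal{H}_{2k-1}=\sum_{i=1}^{2k-1}x_iE_{i-1}$ with $E_0,\ldots,E_{2k-2}\in M_{2^{k-1}}(\mathbb{C})$ (these are unitary with $E_i^HE_j+E_j^HE_i=0$ for $i\ne j$), let $G_i=E_0^HE_i$ for $i=1,\ldots,2k-2$; the induced representation $\rho$ of $\mathcal{G}_{2k-2}$ is given by $\rho(g_i)=G_i$, $\rho(-1)=-I$.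 *)

From HB Require Import structures.
From mathcomp Require Import all_boot all_order all_algebra all_fingroup.
From mathcomp Require Import center mxrepresentation algC.
Set Implicit Arguments. Unset Strict Implicit. Unset Printing Implicit Defensive.
Import Order.TTheory GRing.Theory Num.Theory.
Local Open Scope ring_scope.

(* dimension of H_{2n+2} : dd n = 2^n (by construction dd n.+1 = dd n + dd n,
   so that block matrices need no casts). *)
Fixpoint dd (n : nat) : nat := if n is n'.+1 then (dd n' + dd n')%N else 1%N.

Definition ctr (m : nat) (A : 'M[algC]_m) : 'M[algC]_m := (map_mx (fun z : algC => z^*) A)^T.

(* Hd x n = H_{2(n+1)} evaluated at the (real) values x_1, x_2, ... given by
   x : nat -> algC  (x i is x_i; x 0 is unused).
   H_2 = (x_1 + x_2 i),
   H_{2k} = [[H_{2k-2}, (x_{2k-1}+x_{2k} i) I], [-(x_{2k-1}-x_{2k} i) I, H_{2k-2}^H]].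
   With k = n+2: x_{2k-1} = x (2n+3), x_{2k} = x (2n+4). *)
Fixpoint Hd (x : nat -> algC) (n : nat) : 'M[algC]_(dd n) :=
  match n return 'M[algC]_(dd n) with
  | 0 => (x 1%N + x 2%N * 'i)%:M
  | n'.+1 =>
      block_mx (Hd x n') ((x (2 * n' + 3)%N + x (2 * n' + 4)%N * 'i)%:M)
               (- (x (2 * n' + 3)%N - x (2 * n' + 4)%N * 'i)%:M) (ctr (Hd x n'))
  end.

Definition unitpt (i : nat) : nat -> algC := fun j => if j == i then 1 else 0.

(* H_{2k-1} (k = n+1) is H_{2k} with x_{2k} = 0; it is linear in the x's, so
   its coefficient matrix E_{i-1} of x_i (1 <= i <= 2k-1 = 2n+1) is its value
   at the point e_i (which has x_{2k} = 0). *)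
Definition Ecoef (n : nat) (j : nat) : 'M[algC]_(dd n) := Hd (unitpt j.+1) n.

(* G_i = E_0^H E_i, i = 1 .. 2k-2 = 2n ; indexed by i : 'I_(2n), G_(i+1). *)
Definition Gmat (n : nat) (i : 'I_(2 * n)) : 'M[algC]_(dd n) :=
  ctr (Ecoef n 0) *m Ecoef n (i.+1).

From HB Require Import structures.
From mathcomp Require Import all_boot all_order all_algebra all_fingroup.
From mathcomp Require Import center pgroup mxrepresentation algC classfun zify.
Import Order.TTheory GRing.Theory Num.Theory.
Local Open Scope ring_scope.

(* Write X_j for the coefficient matrix of x_j in H_{2k}, so X_1 = I and
   G_i = X_{i+1}.  An induction along the block recursion shows that
   X_2, ..., X_{2k} are anti-Hermitian, square to -I and pairwise anticommute,
   so the G_i satisfy the defining relations of G_{2k-2}.  These relations bring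
   every word in the generators to a normal form z^a g_S (g_S the ordered
   product of the g_i, i in S); as there are 2^{2k-1} = |G_{2k-2}| normal forms,
   they are pairwise distinct, and evaluating the normal form of a group element
   at the matrices gives the representation.  Block induction again shows that
   a matrix commuting with X_2, ..., X_{2k-1} is scalar; since representations
   over algC are completely reducible, the projection onto any submodule along
   a complement is then scalar, hence the representation is irreducible. *)

Section ConjugateTranspose.
Variable m : nat.
Implicit Types A B C D : 'M[algC]_m.

Lemma ctr_block A B C D :
  ctr (block_mx A B C D : 'M_(m + m)) = block_mx (ctr A) (ctr C) (ctr B) (ctr D).
Proof. by rewrite /ctr map_block_mx tr_block_mx. Qed.

Lemma ctrN A : ctr (- A) = - ctr A.
Proof. by apply/matrixP => i j; rewrite !mxE rmorphN. Qed.

Lemma ctr0 : ctr (0 : 'M[algC]_m) = 0.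
Proof. by apply/matrixP => i j; rewrite !mxE rmorph0. Qed.

Lemma ctr_scalar (c : algC) : ctr c%:M = (c^*)%:M :> 'M_m.
Proof. by apply/matrixP => i j; rewrite !mxE eq_sym; case: (_ == _); rewrite /= ?rmorph0. Qed.

End ConjugateTranspose.

Definition Hcoef (m j : nat) : 'M[algC]_(dd m) := Hd (unitpt j) m.

Lemma Hd_eq0 x m : (forall j, (0 < j <= 2 * m + 2)%N -> x j = 0) -> Hd x m = 0.
Proof.
elim: m => [|m IHm] x0 /=; first by rewrite !x0 // mul0r addr0 raddf0.
rewrite IHm => [|j hj]; last by apply: x0; lia.
by rewrite !x0 1?mul0r ?addr0 ?subr0 ?raddf0 ?oppr0 ?ctr0 ?block_mx0 //; lia.
Qed.

Lemma Hcoef1 m : Hcoef m 1 = 1%:M.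
Proof.
elim: m => [|m IHm]; first by rewrite /Hcoef /= /unitpt /= mul0r addr0.
rewrite /Hcoef /= -/(Hcoef m 1) IHm /unitpt.
have [-> ->] : (2 * m + 3 == 1)%N = false /\ (2 * m + 4 == 1)%N = false.
  by split; apply/eqP; lia.
by rewrite mul0r addr0 subr0 raddf0 oppr0 ctr_scalar conjC1 -scalar_mx_block.
Qed.

Lemma Hcoef_old m j : (2 <= j <= 2 * m + 2)%N ->
  Hcoef m.+1 j = block_mx (Hcoef m j) 0 0 (ctr (Hcoef m j)).
Proof.
move=> hj; rewrite /Hcoef /= /unitpt.
have [-> ->] : (2 * m + 3 == j)%N = false /\ (2 * m + 4 == j)%N = false.
  by split; apply/eqP; lia.
by rewrite mul0r addr0 subr0 raddf0 oppr0.
Qed.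

Lemma Hcoef_new_re m : Hcoef m.+1 (2 * m + 3) = block_mx 0 1%:M (- 1%:M) 0.
Proof.
rewrite /Hcoef /= Hd_eq0 ?ctr0 => [|j hj]; last by rewrite /unitpt; case: eqP => //; lia.
rewrite /unitpt eqxx (_ : (2 * m + 4 == 2 * m + 3)%N = false); last by apply/eqP; lia.
by rewrite mul0r addr0 subr0.
Qed.

Lemma Hcoef_new_im m : Hcoef m.+1 (2 * m + 4) = block_mx 0 'i%:M 'i%:M 0.
Proof.
rewrite /Hcoef /= Hd_eq0 ?ctr0 => [|j hj]; last by rewrite /unitpt; case: eqP => //; lia.
rewrite /unitpt eqxx (_ : (2 * m + 3 == 2 * m + 4)%N = false); last by apply/eqP; lia.
by rewrite mul1r add0r sub0r raddfN opprK.
Qed.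

Lemma Hcoef_range m j : (2 <= j <= 2 * m.+1 + 2)%N ->
  [\/ (2 <= j <= 2 * m + 2)%N, j = (2 * m + 3)%N | j = (2 * m + 4)%N].
Proof.
move=> hj; have [?|?] := leqP j (2 * m + 2); first by constructor 1; lia.
by have [?|?] := leqP j (2 * m + 3); [constructor 2 | constructor 3]; lia.
Qed.

Lemma ctr_Hcoef m j : (2 <= j <= 2 * m + 2)%N -> ctr (Hcoef m j) = - Hcoef m j.
Proof.
elim: m j => [|m IHm] j.
  move=> hj; have -> : j = 2%N by lia.
  by rewrite /Hcoef /= /unitpt /= mul1r add0r ctr_scalar conjCi raddfN.
case/Hcoef_range=> [hj|->|->].
- by rewrite Hcoef_old // ctr_block ctr0 IHm // ctrN IHm // opp_block_mx oppr0 !opprK.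
- by rewrite Hcoef_new_re ctr_block ctr0 ctrN ctr_scalar conjC1 opp_block_mx oppr0 opprK.
- by rewrite Hcoef_new_im ctr_block ctr0 ctr_scalar conjCi opp_block_mx oppr0 raddfN.
Qed.

Lemma Hcoef_lift m j : (2 <= j <= 2 * m + 2)%N ->
  Hcoef m.+1 j = block_mx (Hcoef m j) 0 0 (- Hcoef m j).
Proof. by move=> hj; rewrite Hcoef_old // ctr_Hcoef. Qed.

Lemma opp1_block m : - 1%:M = block_mx (- 1%:M) 0 0 (- 1%:M) :> 'M[algC]_(dd m.+1).
Proof. by rewrite [in LHS](scalar_mx_block (dd m) (dd m)) opp_block_mx oppr0. Qed.

Lemma Hcoef_sqr m j : (2 <= j <= 2 * m + 2)%N -> Hcoef m j *m Hcoef m j = - 1%:M.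
Proof.
elim: m j => [|m IHm] j.
  move=> hj; have -> : j = 2%N by lia.
  by rewrite /Hcoef /= /unitpt /= mul1r add0r -scalar_mxM mulCii raddfN.
rewrite opp1_block; case/Hcoef_range=> [hj|->|->].
- by rewrite Hcoef_lift // mulmx_block !(mulmx0, mul0mx, addr0, add0r) mulNmx mulmxN opprK IHm.
- by rewrite Hcoef_new_re mulmx_block !(mulmx0, mul0mx, addr0, add0r) mulmxN mulNmx mulmx1.
- by rewrite Hcoef_new_im mulmx_block !(mulmx0, mul0mx, addr0, add0r) -scalar_mxM mulCii raddfN.
Qed.

Lemma anticommC (R : pzRingType) n (A B : 'M[R]_n) : A *m B = - (B *m A) -> B *m A = - (A *m B).
Proof. by move->; rewrite opprK. Qed.

Lemma Hcoef_anticomm m j k : (2 <= j <= 2 * m + 2)%N -> (2 <= k <= 2 * m + 2)%N -> j != k ->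
  Hcoef m j *m Hcoef m k = - (Hcoef m k *m Hcoef m j).
Proof.
elim: m j k => [|m IHm] j k.
  by move=> hj hk; have -> : j = k by [lia]; rewrite eqxx.
have re_im : Hcoef m.+1 (2 * m + 3) *m Hcoef m.+1 (2 * m + 4)
           = - (Hcoef m.+1 (2 * m + 4) *m Hcoef m.+1 (2 * m + 3)).
  rewrite Hcoef_new_re Hcoef_new_im !mulmx_block opp_block_mx.
  by rewrite !(mulmx0, mul0mx, addr0, add0r, oppr0, mulmxN, mulNmx, mulmx1, mul1mx, opprK).
have low_re j' : (2 <= j' <= 2 * m + 2)%N -> Hcoef m.+1 j' *m Hcoef m.+1 (2 * m + 3)
           = - (Hcoef m.+1 (2 * m + 3) *m Hcoef m.+1 j').
  move=> hj'; rewrite Hcoef_new_re Hcoef_lift // !mulmx_block opp_block_mx.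
  by rewrite !(mulmx0, mul0mx, addr0, add0r, oppr0, mulmxN, mulNmx, mulmx1, mul1mx, opprK).
have low_im j' : (2 <= j' <= 2 * m + 2)%N -> Hcoef m.+1 j' *m Hcoef m.+1 (2 * m + 4)
           = - (Hcoef m.+1 (2 * m + 4) *m Hcoef m.+1 j').
  move=> hj'; rewrite Hcoef_new_im Hcoef_lift // !mulmx_block opp_block_mx.
  by rewrite !(mulmx0, mul0mx, addr0, add0r, oppr0, mulmxN, mulNmx, opprK) scalar_mxC.
move=> /Hcoef_range[hj|->|->] /Hcoef_range[hk|->|->] jk;
  try by rewrite eqxx in jk.
- rewrite !Hcoef_lift // !mulmx_block opp_block_mx.
  by rewrite !(mulmx0, mul0mx, addr0, add0r, oppr0, mulmxN, mulNmx, opprK) IHm.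
- exact: low_re.
- exact: low_im.
- exact/anticommC/low_re.
- exact: re_im.
- exact/anticommC/low_im.
- exact/anticommC/re_im.
Qed.

Lemma mx_anticomm_i n (B : 'M[algC]_n) : B *m 'i%:M = - ('i%:M *m B) -> B = 0.
Proof.
rewrite scalar_mxC !mul_scalar_mx => /eqP; rewrite -subr_eq0 opprK -scalerDl.
rewrite scaler_eq0 => /orP[|/eqP //].
by rewrite -mulr2n mulrn_eq0 /= (negPf (neq0Ci _)).
Qed.

Lemma split_block_dd {R : Type} {m} (M : 'M[R]_(dd m.+1)) :
  exists A B C D, M = block_mx A B C D :> 'M_(dd m + dd m).
Proof. by exists (ulsubmx M), (ursubmx M), (dlsubmx M), (drsubmx M); rewrite submxK. Qed.

Lemma Hcoef_anticomm_eq0 m (M : 'M[algC]_(dd m)) :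
  (forall j, (2 <= j <= 2 * m + 2)%N -> M *m Hcoef m j = - (Hcoef m j *m M)) -> M = 0.
Proof.
elim: m M => [|m IHm] M antiM.
  by apply: mx_anticomm_i; have := antiM 2%N isT; rewrite /Hcoef /= /unitpt /= mul1r add0r.
have [A [B [C [D defM]]]] := split_block_dd M; rewrite defM in antiM *.
have := antiM (2 * m + 3)%N ltac:(lia); rewrite Hcoef_new_re !mulmx_block opp_block_mx.
move/eq_block_mx; rewrite !(mulmx0, mul0mx, addr0, add0r, mulmxN, mulNmx, mulmx1, mul1mx, opprK).
move=> [eBC eAD _ _].
have := antiM (2 * m + 4)%N ltac:(lia); rewrite Hcoef_new_im !mulmx_block opp_block_mx.
move/eq_block_mx; rewrite !(mulmx0, mul0mx, addr0, add0r) => -[eB _ _ _].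
have B0 : B = 0 by apply: mx_anticomm_i; rewrite eB (oppr_inj eBC).
have C0 : C = 0 by rewrite -B0; apply: oppr_inj.
have A0 : A = 0.
  apply: IHm => j hj; have := antiM j ltac:(lia).
  rewrite Hcoef_lift // !mulmx_block opp_block_mx => /eq_block_mx[+ _ _ _].
  by rewrite !(mulmx0, mul0mx, addr0).
by rewrite B0 C0 A0 -(opprK D) -eAD A0 oppr0 block_mx0.
Qed.

Lemma Hcoef_comm_scalar m (M : 'M[algC]_(dd m)) :
  (forall j, (2 <= j <= 2 * m + 1)%N -> M *m Hcoef m j = Hcoef m j *m M) ->
  exists c, M = c%:M.
Proof.
elim: m M => [|m IHm] M commM; first by exists (M 0 0); apply: mx11_scalar.
have [A [B [C [D defM]]]] := split_block_dd M; rewrite defM in commM *.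
have := commM (2 * m + 3)%N ltac:(lia); rewrite Hcoef_new_re !mulmx_block.
move/eq_block_mx; rewrite !(mulmx0, mul0mx, addr0, add0r, mulmxN, mulNmx, mulmx1, mul1mx).
move=> [eBC eAD _ _].
have B0 : B = 0.
  apply: Hcoef_anticomm_eq0 => j hj; have := commM j ltac:(lia).
  rewrite Hcoef_lift // !mulmx_block => /eq_block_mx[_ + _ _].
  by rewrite mulmx0 mul0mx add0r addr0 mulmxN => <-; rewrite opprK.
have [c defA] : exists c, A = c%:M.
  apply: IHm => j hj; have := commM j ltac:(lia).
  rewrite Hcoef_lift; last lia.
  rewrite !mulmx_block => /eq_block_mx[+ _ _ _].
  by rewrite !(mulmx0, mul0mx, addr0).
exists c; rewrite (scalar_mx_block (dd m) (dd m)).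
by rewrite -eAD defA -eBC B0 oppr0.
Qed.

Lemma Gmat_Hcoef n (i : 'I_(2 * n)) : Gmat i = Hcoef n i.+2.
Proof.
by rewrite /Gmat /Ecoef -/(Hcoef n 1) -/(Hcoef n i.+2) Hcoef1 ctr_scalar conjC1 mul1mx.
Qed.

Lemma Gmat_sqr n (i : 'I_(2 * n)) : Gmat i *m Gmat i = - 1%:M.
Proof. by rewrite Gmat_Hcoef Hcoef_sqr //; have := ltn_ord i; lia. Qed.

Lemma Gmat_anticomm n (i j : 'I_(2 * n)) : i != j ->
  Gmat i *m Gmat j = - 1%:M *m (Gmat j *m Gmat i).
Proof.
move=> ij; have := ltn_ord i; have := ltn_ord j => ltj lti.
by rewrite mulNmx mul1mx !Gmat_Hcoef Hcoef_anticomm ?eqSS //; lia.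
Qed.

Lemma Gmat_cent_scalar n (A : 'M[algC]_(dd n)) :
  (forall i : 'I_(2 * n), A *m Gmat i = Gmat i *m A) -> exists c, A = c%:M.
Proof.
move=> cGA; apply: Hcoef_comm_scalar => j hj.
have lt_j2_2n : (j - 2 < 2 * n)%N by lia.
have -> : j = (Ordinal lt_j2_2n).+2 by rewrite /=; lia.
by rewrite -Gmat_Hcoef.
Qed.

Lemma cent_scalar_mx_irr (F : fieldType) (gT : finGroupType) (G : {group gT}) m
    (rG : mx_representation F G m) :
  ([pchar F]^'.-group G)%g -> (0 < m)%N ->
  (forall A, (forall x, x \in G -> A *m rG x = rG x *m A) -> exists c, A = c%:M) ->
  mx_irreducible rG.
Proof.
move=> F'G m_gt0 centG; apply/mx_irrP; split=> // U modU nzU.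
have [W modW defUW /mxdirect_addsP dxUW] := mx_Maschke_pchar rG F'G modU (submx1 U).
have sub1UW : (1%:M <= U + W)%MS by rewrite defUW.
have [c defP] : exists c, proj_mx U W = c%:M.
  apply: centG => x Gx; move/hom_mxP: (submx_trans sub1UW (proj_mx_hom dxUW modU modW)).
  by move/(_ x Gx); rewrite !mul1mx.
have c1 : c = 1.
  move: (proj_mx_id dxUW (submx_refl U)); rewrite defP mul_mx_scalar => /eqP.
  rewrite -subr_eq0 -{2}[U]scale1r -scalerBl scaler_eq0 (negPf nzU) orbF subr_eq0.
  by move/eqP.
have W0 : W = 0 by rewrite -(proj_mx_0 dxUW (submx_refl W)) defP c1 mulmx1.
by rewrite -sub1mx; move: sub1UW; rewrite W0 addsmx0.
Qed.

Section CliffordWords.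
Context {T : Type} (mul : T -> T -> T) (one z : T) {m : nat} (g : 'I_m -> T).
Hypotheses (mulA : associative mul) (mul1 : left_id one mul).
Hypotheses (zC : forall i, mul z (g i) = mul (g i) z) (z2 : mul z z = one).
Hypotheses (g2 : forall i, mul (g i) (g i) = z).
Hypothesis gC : forall i j, i != j -> mul (g i) (g j) = mul z (mul (g j) (g i)).

Definition zpow (b : bool) x := if b then mul z x else x.

Definition word (s : seq 'I_m) (S : {set 'I_m}) :=
  foldr (fun i w => if i \in S then mul (g i) w else w) one s.

(* Whether [g i * word s S] picks up a factor [z]: one per letter of [word s S] that
   [g i] moves across, plus one if it meets [g i] itself. *)
Fixpoint word_sign (s : seq 'I_m) (i : 'I_m) (S : {set 'I_m}) : bool :=
  if s is j :: s' then (if j == i then i \in S else (j \in S) (+) word_sign s' i S)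
  else false.

Definition toggle (S : {set 'I_m}) i := [set j | (j \in S) (+) (j == i)].

Lemma word_cons j s S : word (j :: s) S = if j \in S then mul (g j) (word s S) else word s S.
Proof. by []. Qed.

Lemma word_toggle_notin s S i : i \notin s -> word s (toggle S i) = word s S.
Proof.
elim: s => [//|j s IHs]; rewrite inE negb_or => /andP[ij /IHs].
by rewrite !word_cons inE eq_sym (negPf ij) addbF => ->.
Qed.

Lemma zpow_mul b i x : mul (g i) (zpow b x) = zpow b (mul (g i) x).
Proof. by case: b => //=; rewrite !mulA zC. Qed.

Lemma zpowK a b x : zpow a (zpow b x) = zpow (a (+) b) x.
Proof. by case: a; case: b => //=; rewrite mulA z2 mul1. Qed.

Lemma mul_word s S i : uniq s -> i \in s ->
  mul (g i) (word s S) = zpow (word_sign s i S) (word s (toggle S i)).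
Proof.
elim: s => [//|j s IHs]; rewrite cons_uniq inE !word_cons => /andP[js us].
case: (eqVneq j i) => [<- _ | ji /= i_s].
  by rewrite /= word_toggle_notin // inE eqxx addbT; case: (j \in S); rewrite /= ?mulA ?g2.
rewrite /= (negPf ji) inE (negPf ji) addbF; case: (j \in S) => /=; last exact: IHs.
by rewrite mulA gC 1?eq_sym // -!mulA IHs // zpow_mul -[mul z _]/(zpow true _) zpowK.
Qed.

(* Every element of the group generated by [z] and the [g i] is some [normal_word (a, S)]. *)
Definition normal_word (p : bool * {set 'I_m}) := zpow p.1 (word (enum 'I_m) p.2).

Definition normal_word_act (o : option 'I_m) (p : bool * {set 'I_m}) :=
  if o is Some i then (p.1 (+) word_sign (enum 'I_m) i p.2, toggle p.2 i) else (~~ p.1, p.2).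

Lemma mul_normal_word o p : mul (oapp g z o) (normal_word p) = normal_word (normal_word_act o p).
Proof.
case: o p => [i|] [a S]; rewrite /normal_word /=; last first.
  by rewrite -[mul z _]/(zpow true _) zpowK.
by rewrite zpow_mul mul_word ?enum_uniq ?mem_enum // zpowK.
Qed.

Lemma normal_word0 : normal_word (false, set0) = one.
Proof. by rewrite /normal_word /=; elim: (enum 'I_m) => //= i s ->; rewrite inE. Qed.

End CliffordWords.

(* [fG] and [fM] evaluate the same normal forms [D] in [G] and in the matrices, and
   [act] is left multiplication by a generator on normal forms.  Since there are at
   most [#|G|] normal forms, [fG] is a bijection onto [G], along which [fM] is
   transported to a representation. *)
Section ReprOfNormalForm.
Context {F : fieldType} {gT : finGroupType} {G : {group gT}} {I D : finType} {n : nat}.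
Context {gen : I -> gT} {genM : I -> 'M[F]_n} {act : I -> D -> D} {d0 : D}.
Context {fG : D -> gT} {fM : D -> 'M[F]_n}.
Hypotheses (defG : G :=: <<[set gen i | i : I]>>%g) (leDG : (#|D| <= #|G|)%N).
Hypotheses (fG0 : fG d0 = 1%g) (fM0 : fM d0 = 1%:M).
Hypothesis fG_act : forall i d, (gen i * fG d)%g = fG (act i d).
Hypothesis fM_act : forall i d, genM i *m fM d = fM (act i d).

Lemma word_gen_ind (P : gT -> Prop) : P 1%g -> (forall i x, x \in G -> P x -> P (gen i * x)%g) ->
  forall x, x \in G -> P x.
Proof.
move=> P1 PM x; rewrite defG => /gen_prodgP[k [c Ac ->]].
elim: k c Ac => [|k IHk] c Ac; first by rewrite big_ord0.
rewrite big_ord_recl; have /imsetP[i _ ->] := Ac ord0.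
apply: PM; last exact: IHk.
by rewrite defG; apply/gen_prodgP; exists k, (fun j => c (lift ord0 j)).
Qed.

Lemma normal_form_onto x : x \in G -> exists d, fG d = x.
Proof.
move: x; apply: word_gen_ind => [|i x _ [d <-]]; first by exists d0.
by exists (act i d); rewrite fG_act.
Qed.

Lemma normal_form_inj : injective fG.
Proof.
have sub_G_codom : G \subset codom fG.
  by apply/subsetP => x /normal_form_onto[d <-]; apply: codom_f.
have /image_injP inj_fG : #|codom fG| == #|D|.
  rewrite eqn_leq leq_image_card /=.
  exact: leq_trans leDG (subset_leq_card sub_G_codom).
by move=> d e; apply: inj_fG.
Qed.

Definition normal_form_repr x := fM (odflt d0 [pick d | fG d == x]).

Lemma normal_form_reprE d : normal_form_repr (fG d) = fM d.
Proof.
rewrite /normal_form_repr; case: pickP => [e /eqP/normal_form_inj -> // | /(_ d)].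
by rewrite eqxx.
Qed.

Lemma normal_form_repr_gen_mul i x : x \in G ->
  normal_form_repr (gen i * x)%g = genM i *m normal_form_repr x.
Proof.
by case/normal_form_onto=> d <-; rewrite fG_act !normal_form_reprE fM_act.
Qed.

Lemma normal_form_repr_is_repr : mx_repr G normal_form_repr.
Proof.
have repr1 : normal_form_repr 1%g = 1%:M by rewrite -fG0 normal_form_reprE.
split=> // x y Gx Gy; move: x Gx; apply: word_gen_ind => [|i x Gx IHx].
  by rewrite mul1g repr1 mul1mx.
by rewrite -mulgA !normal_form_repr_gen_mul ?groupM // IHx mulmxA.
Qed.

Lemma exists_repr_gen : exists rG : mx_representation F G n, forall i, rG (gen i) = genM i.
Proof.
exists (MxRepresentation normal_form_repr_is_repr) => i /=.
by rewrite -[gen i]mulg1 -fG0 fG_act normal_form_reprE -fM_act fM0 mulmx1.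
Qed.

End ReprOfNormalForm.

Lemma imset_oapp (T I : finType) (f : I -> T) (a : T) :
  [set oapp f a o | o : option I] = a |: [set f i | i : I].
Proof.
apply/setP=> x; apply/imsetP/setU1P => [[[i|] _ ->] | [-> | /imsetP[i _ ->]]].
- by right; apply: imset_f.
- by left.
- by exists None.
- by exists (Some i).
Qed.

Lemma dd_exp2 n : dd n = (2 ^ n)%N.
Proof. by elim: n => //= n ->; rewrite expnS mul2n addnn. Qed.

Theorem lemma6 (n : nat) (gT : finGroupType) (G : {group gT})
    (z : gT) (g : 'I_(2 * n) -> gT) :
  G :=: <<(z |: [set g i | i : 'I_(2 * n)])>>%g ->
  #|G| = (2 ^ (2 * n).+1)%N ->
  #[z]%g = 2%N ->
  (z \in 'Z(G))%g ->
  (forall i, (g i ^+ 2)%g = z) ->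
  (forall i j, i != j -> (g i * g j)%g = (z * (g j * g i))%g) ->
  dd n = (2 ^ n)%N /\
  exists rG : mx_representation algC G (dd n),
    [/\ forall i, rG (g i) = Gmat i,
        rG z = - 1%:M
      & mx_irreducible rG].
Proof.
move=> defG cardG oz zZ g2 gC; split; first exact: dd_exp2.
have Gg i : g i \in G by rewrite defG mem_gen // setU1r // imset_f.
have zC i : (z * g i = g i * z)%g by case/centerP: zZ => _; apply.
have z2 : (z * z = 1)%g by rewrite -expg2 -oz expg_order.
have gg i : (g i * g i = z)%g by rewrite -expg2.
have cardD : (#|{: bool * {set 'I_(2 * n)}}| <= #|G|)%N.
  by rewrite card_prod card_bool -cardsT -powersetT card_powerset cardsT card_ord cardG expnS.
have defG' : G :=: <<[set oapp g z o | o : option 'I_(2 * n)]>>%g by rewrite imset_oapp.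
have mzC (i : 'I_(2 * n)) : - 1%:M *m Gmat i = Gmat i *m - 1%:M.
  by rewrite mulNmx mulmxN mul1mx mulmx1.
have mz2 : - 1%:M *m - 1%:M = 1%:M :> 'M[algC]_(dd n).
  by rewrite mulNmx mulmxN opprK mul1mx.
have [rG rG_gen] := exists_repr_gen defG' cardD (normal_word0 _ _ _ _)
  (normal_word0 mulmx _ (- 1%:M) (@Gmat n)) (mul_normal_word _ _ _ _ mulgA mul1g zC z2 gg gC)
  (mul_normal_word _ _ _ _ (@mulmxA _ _ _ _ _) (@mul1mx _ _ _) mzC mz2
                    (@Gmat_sqr n) (@Gmat_anticomm n)).
have rG_g i : rG (g i) = Gmat i := rG_gen (Some i).
exists rG; split=> //; first exact: (rG_gen None).
apply: cent_scalar_mx_irr (algC'G_pchar G) _ _; first by rewrite dd_exp2 expn_gt0.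
by move=> A cGA; apply: Gmat_cent_scalar => i; rewrite -rG_g cGA.
Qed.
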